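(* Let $0\to N\xrightarrow{i} G\xrightarrow{p} Q\to 1$ be a short exact sequence of groups with $N$ abelian (written additively), and let $Z^1(G,N)$ be the abelian group (under pointwise addition) of crossed homomorphisms $\phi:G\to N$. With the multiplication $(\phi\diamond\psi)(x):=\phi(i(\psi(x)))$, $Z^1(G,N)$ is an associative (not necessarily unital) ring, and the map $Res:Z^1(G,N)\to End_Q(N)$, $\phi\mapsto\phi\circ i$, is a ring homomorphism.
   Context: $G$ acts on $N$ by conjugation, $x\cdot n=x+n-x$, and a crossed homomorphism satisfies $\phi(x+y)=\phi(x)+x\cdot\phi(y)$. This induces a $Q$-module structure on $N$; $End_Q(N)$ is the ring of $Q$-module endomorphisms of $N$ under pointwise addition and composition. *)

(* G, Q are (possibly infinite) groups via mathcomp's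
   monoid.v groupType (written multiplicatively, %g); N is an abelian
   group (zmodType, written additively). *)
From HB Require Import structures.
From mathcomp Require Import ssreflect ssrfun ssrbool eqtype choice ssrnat seq.
From mathcomp Require Import monoid ssralg.
Set Implicit Arguments. Unset Strict Implicit. Unset Printing Implicit Defensive.
Import GRing.Theory.

Section Defs.
Variables (N : zmodType) (G Q : groupType) (i : N -> G) (p : G -> Q).

Definition short_exact : Prop :=
  [/\ (forall a b : N, i (a + b)%R = (i a * i b)%g),
      injective i,
      (forall x y : G, p (x * y)%g = (p x * p y)%g),
      (forall q : Q, exists x : G, p x = q)
    & (forall x : G, p x = 1%g <-> exists n : N, i n = x)].

(* act x n m  <->  x . n = m, i.e. i m = x i(n) x^-1 (conjugation in G). *)
Definition act (x : G) (n m : N) : Prop := i m = (x * i n * x^-1)%g.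

Definition crossed_hom (phi : G -> N) : Prop :=
  forall (x y : G) (m : N), act x (phi y) m -> phi (x * y)%g = (phi x + m)%R.

Definition qact (q : Q) (n m : N) : Prop := exists x : G, p x = q /\ act x n m.

Definition EndQ (f : N -> N) : Prop :=
  (forall a b : N, f (a + b)%R = (f a + f b)%R) /\
  (forall (q : Q) (n m : N), qact q n m -> qact q (f n) (f m)).

Definition zaddf (phi psi : G -> N) : G -> N := fun x => (phi x + psi x)%R.
Definition zoppf (phi : G -> N) : G -> N := fun x => (- phi x)%R.
Definition zzero : G -> N := fun _ => 0%R.

Definition diamond (phi psi : G -> N) : G -> N := fun x => phi (i (psi x)).

Definition Res (phi : G -> N) : N -> N := fun n => phi (i n).

End Defs.

From mathcomp Require Import ssreflect ssrfun ssrbool eqtype choice ssrnat seq.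
From mathcomp Require Import monoid ssralg.
From Stdlib Require Import FunctionalExtensionality.

(* Exactness makes conjugation by x a well-defined additive map n |-> x . n on
   N.  Since N is abelian, i(N) acts trivially on N; hence a crossed
   homomorphism phi is additive on i(N) (phi (i a * i b) = phi (i a) + phi (i b))
   and intertwines the action: comparing phi (x * i n) with
   phi (i (x . n) * x) gives x . phi (i n) = phi (i (x . n)).  Closure of
   Z^1(G,N) under +, -, 0 and the product, left distributivity and the
   properties of Res all follow; the remaining ring laws hold pointwise. *)

Set Implicit Arguments.
Unset Strict Implicit.
Unset Printing Implicit Defensive.
Import GRing.Theory.
Local Open Scope group_scope.

Section ShortExactSequence.
Variables (N : zmodType) (G Q : groupType) (i : N -> G) (p : G -> Q).
Hypothesis exact_ip : short_exact i p.

Lemma iD a b : i (a + b)%R = i a * i b.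
Proof. by case: exact_ip. Qed.

Lemma i_inj : injective i.
Proof. by case: exact_ip. Qed.

Lemma pM x y : p (x * y) = p x * p y.
Proof. by case: exact_ip. Qed.

Lemma ker_pP x : p x = 1 <-> exists n, i n = x.
Proof. by case: exact_ip. Qed.

Lemma i0 : i 0%R = 1.
Proof. by apply: (@mulgI _ (i 0%R)); rewrite -iD addr0 mulg1. Qed.

Lemma iN a : i (- a)%R = (i a)^-1.
Proof. by apply: (@mulgI _ (i a)); rewrite -iD subrr i0 mulgV. Qed.

Lemma p1 : p 1 = 1.
Proof. by apply: (@mulgI _ (p 1)); rewrite -pM !mulg1. Qed.

Lemma i_comm a b : i a * i b = i b * i a.
Proof. by rewrite -!iD addrC. Qed.

Lemma act_exists x n : exists m, act i x n m.
Proof.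
have p_conj : p (x * i n * x^-1) = 1.
  have p_in : p (i n) = 1 by apply/ker_pP; exists n.
  by rewrite !pM p_in mulg1 -pM mulgV p1.
by have [m Em] := proj1 (ker_pP _) p_conj; exists m.
Qed.

Lemma act_uniq x n m1 m2 : act i x n m1 -> act i x n m2 -> m1 = m2.
Proof. by move=> E1 E2; apply: i_inj; rewrite E1 E2. Qed.

Lemma act0 x : act i x 0%R 0%R.
Proof. by rewrite /act i0 mulg1 mulgV. Qed.

Lemma actD x a b ma mb :
  act i x a ma -> act i x b mb -> act i x (a + b)%R (ma + mb)%R.
Proof. by rewrite /act !iD => -> ->; rewrite !mulgA mulgVK. Qed.

Lemma actN x a m : act i x a m -> act i x (- a)%R (- m)%R.
Proof. by rewrite /act !iN => ->; rewrite !invgM invgK mulgA. Qed.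

Lemma act_i a n : act i (i a) n n.
Proof. by rewrite /act i_comm mulgK. Qed.

Lemma crossed_hom0 : crossed_hom i (@zzero N G).
Proof. by move=> x y m E; rewrite /zzero add0r (act_uniq E (act0 x)). Qed.

Lemma crossed_homD phi psi :
  crossed_hom i phi -> crossed_hom i psi -> crossed_hom i (zaddf phi psi).
Proof.
move=> phi_ch psi_ch x y m E; rewrite /zaddf.
have [m1 E1] := act_exists x (phi y); have [m2 E2] := act_exists x (psi y).
rewrite (phi_ch _ _ _ E1) (psi_ch _ _ _ E2) (act_uniq E (actD E1 E2)).
by rewrite addrACA.
Qed.

Lemma crossed_homN phi : crossed_hom i phi -> crossed_hom i (zoppf phi).
Proof.
move=> phi_ch x y m E; rewrite /zoppf.
have [m1 E1] := act_exists x (phi y).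
by rewrite (phi_ch _ _ _ E1) (act_uniq E (actN E1)) opprD.
Qed.

Lemma crossed_hom_iD phi : crossed_hom i phi ->
  forall a b, phi (i (a + b)%R) = (phi (i a) + phi (i b))%R.
Proof. by move=> phi_ch a b; rewrite iD (phi_ch _ _ _ (act_i a _)). Qed.

Lemma crossed_hom_act phi : crossed_hom i phi ->
  forall x n m, act i x n m -> act i x (phi (i n)) (phi (i m)).
Proof.
move=> phi_ch x n m E.
have [k Ek] := act_exists x (phi (i n)).
have x_in : x * i n = i m * x by rewrite E mulgVK.
have := phi_ch _ _ _ Ek.
rewrite x_in (phi_ch _ _ _ (act_i m (phi x))) addrC => /addrI k_eq.
by rewrite k_eq.
Qed.

Lemma crossed_hom_diamond phi psi :
  crossed_hom i phi -> crossed_hom i psi -> crossed_hom i (diamond i phi psi).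
Proof.
move=> phi_ch psi_ch x y m E; rewrite /diamond.
have [m1 E1] := act_exists x (psi y).
rewrite (psi_ch _ _ _ E1) crossed_hom_iD //.
by rewrite (act_uniq E (crossed_hom_act phi_ch E1)).
Qed.

Lemma EndQ_Res phi : crossed_hom i phi -> EndQ i p (Res i phi).
Proof.
move=> phi_ch; split; first exact: crossed_hom_iD.
by move=> q n m [x [px E]]; exists x; split; last exact: crossed_hom_act.
Qed.

Lemma diamondDr phi psi chi : crossed_hom i phi ->
  diamond i phi (zaddf psi chi) = zaddf (diamond i phi psi) (diamond i phi chi).
Proof.
by move=> phi_ch; apply: functional_extensionality => x; exact: crossed_hom_iD.
Qed.

End ShortExactSequence.

Theorem lemma7 (N : zmodType) (G Q : groupType) (i : N -> G) (p : G -> Q) :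
  short_exact i p ->
  (* Z^1(G,N) is an abelian group under pointwise addition *)
  crossed_hom i (@zzero N G) /\
  (forall phi psi, crossed_hom i phi -> crossed_hom i psi ->
     crossed_hom i (zaddf phi psi)) /\
  (forall phi, crossed_hom i phi -> crossed_hom i (zoppf phi)) /\
  (* closed under the product *)
  (forall phi psi, crossed_hom i phi -> crossed_hom i psi ->
     crossed_hom i (diamond i phi psi)) /\
  (* associativity *)
  (forall phi psi chi, crossed_hom i phi -> crossed_hom i psi -> crossed_hom i chi ->
     diamond i (diamond i phi psi) chi = diamond i phi (diamond i psi chi)) /\
  (* distributivity *)
  (forall phi psi chi, crossed_hom i phi -> crossed_hom i psi -> crossed_hom i chi ->
     diamond i phi (zaddf psi chi) = zaddf (diamond i phi psi) (diamond i phi chi)) /\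
  (forall phi psi chi, crossed_hom i phi -> crossed_hom i psi -> crossed_hom i chi ->
     diamond i (zaddf phi psi) chi = zaddf (diamond i phi chi) (diamond i psi chi)) /\
  (* Res : Z^1(G,N) -> End_Q(N) is a ring homomorphism *)
  (forall phi, crossed_hom i phi -> EndQ i p (Res i phi)) /\
  (forall phi psi, crossed_hom i phi -> crossed_hom i psi ->
     Res i (zaddf phi psi) = (fun n => Res i phi n + Res i psi n)%R) /\
  (forall phi psi, crossed_hom i phi -> crossed_hom i psi ->
     Res i (diamond i phi psi) = Res i phi \o Res i psi).
Proof.
move=> exact_ip.
split; first exact: (crossed_hom0 exact_ip).
split; first by move=> phi psi; exact: (crossed_homD exact_ip).
split; first by move=> phi; exact: (crossed_homN exact_ip).
split; first by move=> phi psi; exact: (crossed_hom_diamond exact_ip).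
split; first by [].
split; first by move=> phi psi chi phi_ch _ _; exact: (diamondDr exact_ip).
split; first by [].
split; first by move=> phi; exact: (EndQ_Res exact_ip).
by split.
Qed.
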